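(* Let $C\subseteq\mathbb{R}^q$ be a nonempty closed convex cone that is not a linear subspace, $\mathcal{X}\subseteq\mathbb{R}^m$ a nonempty convex set, and $\Gamma:\mathbb{R}^m\to\mathbb{R}^q$ a $C$-convex map. Let $k\in\operatorname{ri} C$ and $e^1,\dots,e^{q-1}\in\mathbb{R}^q$ such that $e^1,\dots,e^{q-1},k$ are linearly independent; let $E=(e^1,\dots,e^{q-1})$ and $T=(e^1,\dots,e^{q-1},k)$. Let $\varphi(y)=\inf\{r\in\mathbb{R} : rk-y\in C\}$ and $f(z)=\inf_{x\in\mathcal{X}}\varphi(\Gamma(x)-Ez)$ for $z\in\mathbb{R}^{q-1}$. For $w\in\mathbb{R}^{q-1}$ let $c^*(w)=T^{-T}\begin{pmatrix}w\\1\end{pmatrix}$. Then the conjugate of $f$ is $$f^*(w)=\begin{cases}\left[\langle c^*(-w),\Gamma(\cdot)\rangle+\delta_{\mathcal{X}}\right]^*(0) & \text{if } c^*(-w)\in C^+,\\ +\infty & \text{otherwise,}\end{cases}$$ where $C^+=\{c^*\in\mathbb{R}^q : \langle c^*,c\rangle\ge 0\ \forall c\in C\}$.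
   Context: $\Gamma$ is $C$-convex if $(1-t)\Gamma(x_1)+t\Gamma(x_2)-\Gamma((1-t)x_1+tx_2)\in C$ for all $x_1,x_2$, $t\in[0,1]$. $\delta_{\mathcal{X}}$ is the indicator function of $\mathcal{X}$; $g^*(p)=\sup_x(\langle p,x\rangle-g(x))$ denotes the Legendre–Fenchel conjugate, so $[\langle c,\Gamma\rangle+\delta_{\mathcal{X}}]^*(0)=-\inf_{x\in\mathcal{X}}\langle c,\Gamma(x)\rangle$. $T^{-T}$ is the inverse of the transpose of $T$. *)

From HB Require Import structures.
From mathcomp Require Import all_boot all_order all_algebra.
From mathcomp Require Import all_classical all_reals all_analysis.
Set Implicit Arguments. Unset Strict Implicit. Unset Printing Implicit Defensive.
Import Order.TTheory GRing.Theory Num.Theory.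
Import numFieldNormedType.Exports.
Local Open Scope classical_set_scope.
Local Open Scope ring_scope.

Section Defs.
Variable R : realType.

Definition dotv (d : nat) (u v : 'cV[R]_d) : R := \sum_(i < d) u i 0 * v i 0.

Definition is_cone (d : nat) (C : set 'cV[R]_d) : Prop :=
  forall c t, C c -> 0 <= t -> C (t *: c).

Definition is_linear_subspace (d : nat) (S : set 'cV[R]_d) : Prop :=
  [/\ S 0, (forall x y, S x -> S y -> S (x + y)) &
      (forall a x, S x -> S (a *: x))].

Definition aff_hull (d : nat) (S : set 'cV[R]_d) : set 'cV[R]_d :=
  [set y | exists (n : nat) (p : 'I_n -> 'cV[R]_d) (a : 'I_n -> R),
     [/\ (forall i, S (p i)), \sum_(i < n) a i = 1 & y = \sum_(i < n) a i *: p i]].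

(* relative interior (w.r.t. the sup-norm, equivalent to any norm on R^d) *)
Definition rel_interior (d : nat) (S : set 'cV[R]_d) : set 'cV[R]_d :=
  [set x | S x /\ exists eps : R, 0 < eps /\
     forall y, aff_hull S y -> (forall i, `|y i 0 - x i 0| < eps) -> S y].

Definition C_convex (m q : nat) (C : set 'cV[R]_q) (G : 'cV[R]_m -> 'cV[R]_q) : Prop :=
  forall x1 x2 t, 0 <= t -> t <= 1 ->
    C ((1 - t) *: G x1 + t *: G x2 - G ((1 - t) *: x1 + t *: x2)).

Definition dual_cone (d : nat) (C : set 'cV[R]_d) : set 'cV[R]_d :=
  [set cs | forall c, C c -> 0 <= dotv cs c].

Definition indicator (d : nat) (X : set 'cV[R]_d) (x : 'cV[R]_d) : \bar R :=
  if `[< X x >] then 0%E else +oo%E.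

Definition lf_conj (d : nat) (g : 'cV[R]_d -> \bar R) (p : 'cV[R]_d) : \bar R :=
  ereal_sup [set ((dotv p x)%:E - g x)%E | x in [set: 'cV[R]_d]].

Definition phi_k (q : nat) (C : set 'cV[R]_q) (k : 'cV[R]_q) (y : 'cV[R]_q) : \bar R :=
  ereal_inf [set r%:E | r in [set r : R | C (r *: k - y)]].

Definition append_col (d n : nat) (E : 'M[R]_(d, n)) (k : 'cV[R]_d) : 'M[R]_(d, n.+1) :=
  castmx (erefl d, addn1 n) (row_mx E k).

Definition append_coord (n : nat) (w : 'cV[R]_n) (a : R) : 'cV[R]_n.+1 :=
  castmx (addn1 n, erefl 1%N) (col_mx w (a%:M : 'cV[R]_1)).

End Defs.

(* The change of variables (z, r) |-> E z + r k = T (z; r) is a bijection of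
   R^q, and <w, z> - r = - <c*(-w), E z + r k>.  Writing the points with
   r k - (Gamma x - E z) in C as c + Gamma x, the conjugate f*(w) becomes
   the supremum of - <c*(-w), c + Gamma x> over x in X and c in C.  If
   c*(-w) lies in C^+ the supremum over c is attained at c = 0, which gives
   the conjugate of <c*(-w), Gamma> + delta_X at 0; otherwise some c in C has
   <c*(-w), c> < 0 and the rays t c drive the supremum to +oo. *)
From HB Require Import structures.
From mathcomp Require Import all_boot all_order all_algebra.
From mathcomp Require Import all_classical all_reals all_analysis.
From mathcomp Require Import ring lra.
Set Implicit Arguments. Unset Strict Implicit. Unset Printing Implicit Defensive.
Import Order.TTheory GRing.Theory Num.Theory.
Import numFieldNormedType.Exports.
Local Open Scope classical_set_scope.
Local Open Scope ring_scope.

Section DotProduct.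
Variables (R : realType) (d : nat).
Implicit Types (u v : 'cV[R]_d) (A : 'M[R]_d).

Lemma dotvDr u v1 v2 : dotv u (v1 + v2) = dotv u v1 + dotv u v2.
Proof. by rewrite /dotv -big_split; apply: eq_bigr => i _; rewrite mxE mulrDr. Qed.

Lemma dotvZr u v t : dotv u (t *: v) = t * dotv u v.
Proof. by rewrite /dotv mulr_sumr; apply: eq_bigr => i _; rewrite mxE mulrCA mulrA. Qed.

Lemma dotv0l v : dotv 0 v = 0.
Proof. by rewrite /dotv big1 // => i _; rewrite mxE mul0r. Qed.

Lemma dotv0r u : dotv u 0 = 0.
Proof. by rewrite /dotv big1 // => i _; rewrite mxE mulr0. Qed.

Lemma dotvNl u v : dotv (- u) v = - dotv u v.
Proof. by rewrite /dotv -sumrN; apply: eq_bigr => i _; rewrite mxE mulNr. Qed.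

Lemma dotv_mulmxr u v A : dotv u (A *m v) = dotv (A^T *m u) v.
Proof.
rewrite /dotv.
under eq_bigr => i _ do rewrite mxE big_distrr.
under [RHS]eq_bigr => j _ do rewrite mxE big_distrl.
rewrite exchange_big; apply: eq_bigr => j _; apply: eq_bigr => i _.
by rewrite !mxE /= mulrCA mulrA.
Qed.

Lemma dotv_invmx_tr u v A : A \in unitmx -> dotv (invmx A^T *m u) (A *m v) = dotv u v.
Proof. by move=> Au; rewrite dotv_mulmxr mulKVmx // unitmx_tr. Qed.

End DotProduct.

Section AppendCoordinates.
Variables (R : realType) (n : nat).

Lemma cast_widen_ord (i : 'I_n) :
  cast_ord (esym (addn1 n)) (widen_ord (leqnSn n) i) = lshift 1 i.
Proof. exact: val_inj. Qed.

Lemma cast_ord_max : cast_ord (esym (addn1 n)) ord_max = rshift n (0 : 'I_1).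
Proof. by apply: val_inj => /=; rewrite addn0. Qed.

Lemma append_coord_widen (z : 'cV[R]_n) a (i : 'I_n) :
  append_coord z a (widen_ord (leqnSn n) i) 0 = z i 0.
Proof. by rewrite /append_coord castmxE /= cast_ord_id cast_widen_ord col_mxEu. Qed.

Lemma append_coord_max (z : 'cV[R]_n) a : append_coord z a ord_max 0 = a.
Proof. by rewrite /append_coord castmxE /= cast_ord_id cast_ord_max col_mxEd mxE. Qed.

Lemma append_col_widen d (E : 'M[R]_(d, n)) k i (j : 'I_n) :
  append_col E k i (widen_ord (leqnSn n) j) = E i j.
Proof. by rewrite /append_col castmxE /= cast_ord_id cast_widen_ord row_mxEl. Qed.

Lemma append_col_max d (E : 'M[R]_(d, n)) k i : append_col E k i ord_max = k i 0.
Proof. by rewrite /append_col castmxE /= cast_ord_id cast_ord_max row_mxEr. Qed.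

Lemma dotv_append_coord (u z : 'cV[R]_n) b a :
  dotv (append_coord u b) (append_coord z a) = dotv u z + b * a.
Proof.
rewrite /dotv big_ord_recr /= !append_coord_max; congr (_ + _).
by apply: eq_bigr => i _; rewrite !append_coord_widen.
Qed.

Lemma mul_append_col_coord d (E : 'M[R]_(d, n)) k (z : 'cV[R]_n) a :
  append_col E k *m append_coord z a = E *m z + a *: k.
Proof.
apply/matrixP => i j; rewrite (ord1 j) !mxE big_ord_recr /=.
rewrite append_col_max append_coord_max mulrC; congr (_ + _).
by apply: eq_bigr => l _; rewrite append_col_widen append_coord_widen.
Qed.

Lemma append_coordP (v : 'cV[R]_n.+1) : exists z a, v = append_coord z a.
Proof.
exists (\col_i v (widen_ord (leqnSn n) i) 0), (v ord_max 0).
apply/matrixP => i j; rewrite (ord1 j).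
have [lt_in | le_ni] := ltnP i n.
  have -> : i = widen_ord (leqnSn n) (Ordinal lt_in) by apply: val_inj.
  by rewrite append_coord_widen mxE.
have -> : i = ord_max by apply: val_inj => /=; apply/eqP; rewrite eqn_leq le_ni -ltnS ltn_ord.
by rewrite append_coord_max.
Qed.

Lemma append_col_unit_surj (E : 'M[R]_(n.+1, n)) k :
  append_col E k \in unitmx -> forall v, exists z a, E *m z + a *: k = v.
Proof.
move=> Tu v; have [z [a hza]] := append_coordP (invmx (append_col E k) *m v).
by exists z, a; rewrite -mul_append_col_coord -hza mulKVmx.
Qed.

End AppendCoordinates.

Lemma lf_conj_add_indicator0 (R : realType) d (X : set 'cV[R]_d) (g : 'cV[R]_d -> R) :
  lf_conj (fun x => ((g x)%:E + indicator X x)%E) 0 =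
  ereal_sup [set (- g x)%:E | x in X].
Proof.
apply/le_anti/andP; split.
  apply: ge_ereal_sup => _ [x _ <-]; rewrite /indicator dotv0l.
  case: asboolP => [Xx | _]; last exact: leNye.
  by rewrite adde0 sub0e; apply: ereal_sup_ubound; exists x.
apply: ge_ereal_sup => _ [x Xx <-]; apply: ereal_sup_ubound; exists x => //.
by rewrite /indicator asboolT // dotv0l adde0 sub0e.
Qed.

Section ConjugateChangeOfVariables.
Variables (R : realType) (n m : nat).
Variables (C : set 'cV[R]_n.+1) (X : set 'cV[R]_m) (G : 'cV[R]_m -> 'cV[R]_n.+1).
Variables (E : 'M[R]_(n.+1, n)) (k : 'cV[R]_n.+1) (w : 'cV[R]_n) (cs : 'cV[R]_n.+1).
Hypothesis X0 : X !=set0.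
Hypothesis C0 : C !=set0.
Hypothesis surjEk : forall v, exists z a, E *m z + a *: k = v.
Hypothesis dotv_cs : forall z a, dotv w z - a = - dotv cs (E *m z + a *: k).

Let f (z : 'cV[R]_n) : \bar R := ereal_inf [set phi_k C k (G x - E *m z) | x in X].
Let S : \bar R := ereal_sup [set (- dotv cs (c + G x))%:E | x in X & c in C].

Lemma lf_conj_ge_sup_shift : (S <= lf_conj f w)%E.
Proof.
apply: ge_ereal_sup => _ [x Xx [c Cc <-]].
have [z [a hza]] := surjEk (c + G x).
have fz_le : (f z <= a%:E)%E.
  apply: le_trans (ereal_inf_lbound _) _; first by exists x.
  apply: ereal_inf_lbound; exists a => //=.
  by rewrite opprB addrA [a *: k + _]addrC hza addrK.
apply: le_trans (ereal_sup_ubound _); last by exists z.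
by apply: le_trans (leeB (lexx _) fz_le); rewrite -EFinB lee_fin dotv_cs hza.
Qed.

Lemma lf_conj_le_sup_shift : (lf_conj f w <= S)%E.
Proof.
have S_ub x c : X x -> C c -> ((- dotv cs (c + G x))%:E <= S)%E.
  by move=> Xx Cc; apply: ereal_sup_ubound; exists x => //; exists c.
have [x0 Xx0] := X0; have [c0 Cc0] := C0.
apply: ge_ereal_sup => _ [z _ <-].
have := S_ub x0 c0 Xx0 Cc0; move: S_ub; case: S => [s| |] // S_ub _; last by rewrite leey.
suff : ((dotv w z - s)%:E <= f z)%E.
  rewrite lee_subel_addr // => /(leeD (lexx s%:E)).
  by rewrite -EFinD addrC subrK.
apply: le_ereal_inf_tmp => _ [x Xx <-]; apply: le_ereal_inf_tmp => _ [a Ca <-].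
set c := a *: k - (G x - E *m z) in Ca.
have hza : E *m z + a *: k = c + G x by rewrite /c opprB addrA subrK addrC.
by move: (S_ub x c Xx Ca); rewrite -hza -dotv_cs !lee_fin; lra.
Qed.

Lemma lf_conj_sup_shift : lf_conj f w = S.
Proof. by apply/le_anti; rewrite lf_conj_le_sup_shift lf_conj_ge_sup_shift. Qed.

End ConjugateChangeOfVariables.

Section SupOverCone.
Variables (R : realType) (d m : nat).
Variables (C : set 'cV[R]_d) (X : set 'cV[R]_m) (g : 'cV[R]_m -> 'cV[R]_d) (cs : 'cV[R]_d).

Lemma cone_has0 : is_cone C -> C !=set0 -> C 0.
Proof. by move=> Ccone [c Cc]; rewrite -(scale0r c); apply: Ccone. Qed.

Lemma sup_shift_dual_cone : C 0 -> dual_cone C cs ->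
  ereal_sup [set (- dotv cs (c + g x))%:E | x in X & c in C] =
  ereal_sup [set (- dotv cs (g x))%:E | x in X].
Proof.
move=> C0 Cd; apply/le_anti/andP; split.
  apply: ge_ereal_sup => _ [x Xx [c Cc <-]].
  apply: le_trans (ereal_sup_ubound _) ; last by exists x.
  by rewrite lee_fin dotvDr lerN2 lerDr Cd.
apply: ge_ereal_sup => _ [x Xx <-]; apply: ereal_sup_ubound.
by exists x => //; exists 0; rewrite ?add0r.
Qed.

Lemma sup_shift_not_dual_cone : is_cone C -> X !=set0 -> ~ dual_cone C cs ->
  ereal_sup [set (- dotv cs (c + g x))%:E | x in X & c in C] = +oo%E.
Proof.
move=> Ccone [x0 Xx0] nCd.
have [c Cc cs_c_lt0] : exists2 c, C c & dotv cs c < 0.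
  apply: contra_notP nCd => no_c c Cc; rewrite leNgt; apply/negP => lt_c.
  by apply: no_c; exists c.
apply: eq_infty => r; set a := dotv cs (g x0).
set t := (`|r| + `|a|) / - dotv cs c.
have t_ge0 : 0 <= t by rewrite divr_ge0 ?addr_ge0 // oppr_ge0 ltW.
have t_cs_c : t * dotv cs c = - (`|r| + `|a|).
  by rewrite /t invrN mulrN mulNr -mulrA mulVf ?mulr1 // lt_eqF.
have Ctc : C (t *: c) by exact: Ccone.
apply: le_trans (ereal_sup_ubound _); last by exists x0 => //; exists (t *: c).
rewrite lee_fin dotvDr dotvZr t_cs_c -/a.
have := ler_norm r; have := ler_norm a; lra.
Qed.

End SupOverCone.
Theorem proposition5p5 (R : realType) (n m : nat)
  (C : set 'cV[R]_n.+1) (X : set 'cV[R]_m) (G : 'cV[R]_m -> 'cV[R]_n.+1)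
  (E : 'M[R]_(n.+1, n)) (k : 'cV[R]_n.+1) :
  C !=set0 -> closed C -> convex_set C -> is_cone C -> ~ is_linear_subspace C ->
  X !=set0 -> convex_set X ->
  C_convex C G ->
  rel_interior C k ->
  row_free (append_col E k)^T ->
  let T : 'M[R]_n.+1 := append_col E k in
  let cstar (w : 'cV[R]_n) : 'cV[R]_n.+1 := invmx T^T *m append_coord w 1 in
  let f (z : 'cV[R]_n) : \bar R :=
    ereal_inf [set phi_k C k (G x - E *m z) | x in X] in
  forall w : 'cV[R]_n,
    (dual_cone C (cstar (- w)) ->
       lf_conj f w =
       lf_conj (fun x => ((dotv (cstar (- w)) (G x))%:E + indicator X x)%E) 0) /\
    (~ dual_cone C (cstar (- w)) -> lf_conj f w = +oo%E).
Proof.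
move=> C0 _ _ Ccone _ X0 _ _ _ Tfree T cstar f w.
have Tu : T \in unitmx by rewrite -unitmx_tr -row_free_unit.
have dotv_cstar z a : dotv w z - a = - dotv (cstar (- w)) (E *m z + a *: k).
  rewrite -mul_append_col_coord dotv_invmx_tr // dotv_append_coord dotvNl.
  by rewrite mul1r opprD opprK.
rewrite lf_conj_add_indicator0 (lf_conj_sup_shift G X0 C0 (append_col_unit_surj Tu) dotv_cstar).
split => [Cd | nCd].
- exact: sup_shift_dual_cone (cone_has0 Ccone C0) Cd.
- exact: sup_shift_not_dual_cone.
Qed.
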